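(* Let $x\in\mathbb{R}\setminus\mathbb{Q}$. Then $\gamma(x)=\tau(2x)$, where, for an irrational $y$ with continued fraction convergents $p_n/q_n$ ($n\in\mathbb{N}$), \[\tau(y)=\sup\Big\{\tau : \Big|y-\tfrac{p_n}{q_n}\Big|<\tfrac{1}{q_n^{\tau}} \text{ for infinitely many convergents } \tfrac{p_n}{q_n}\text{ of } y \text{ with } p_n,q_n \text{ not both odd}\Big\},\] \[\gamma(y)=\sup\Big\{\gamma : \Big|y-\tfrac{p_n}{q_n}\Big|<\tfrac{1}{q_n^{\gamma}} \text{ for infinitely many } n\in\mathbb{N} \text{ with } q_n\equiv 0,1,3 \pmod 4\Big\}.\]
   Context: The convergents $p_n/q_n$ of an irrational number are the (irreducible) partial quotients of its regular continued fraction expansion. *)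

From Stdlib Require Import Reals ZArith.
From Coquelicot Require Import Coquelicot.
Open Scope R_scope.

Definition irrational (y : R) : Prop :=
  ~ (exists (p q : Z), (q > 0)%Z /\ y = IZR p / IZR q).

(* floor: Int_part r = up r - 1 is the floor of r *)
Fixpoint cf_rem (y : R) (n : nat) : R :=
  match n with
  | O => y
  | S m => / (cf_rem y m - IZR (Int_part (cf_rem y m)))
  end.

Definition cf_a (y : R) (n : nat) : Z := Int_part (cf_rem y n).

(* ((p_n, q_n), (p_{n-1}, q_{n-1})) with p_{-1} = 1, q_{-1} = 0 *)
Fixpoint cf_pq (y : R) (n : nat) : (Z * Z) * (Z * Z) :=
  match n with
  | O => ((cf_a y 0, 1%Z), (1%Z, 0%Z))
  | S m =>
      let '((p, q), (p', q')) := cf_pq y m in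
      let a := cf_a y (S m) in
      (((a * p + p')%Z, (a * q + q')%Z), (p, q))
  end.

Definition cf_p (y : R) (n : nat) : Z := fst (fst (cf_pq y n)).
Definition cf_q (y : R) (n : nat) : Z := snd (fst (cf_pq y n)).

Definition infinitely_often (P : nat -> Prop) : Prop :=
  forall N : nat, exists n : nat, (N <= n)%nat /\ P n.

Definition cf_approx (y t : R) (n : nat) : Prop :=
  Rabs (y - IZR (cf_p y n) / IZR (cf_q y n)) < / Rpower (IZR (cf_q y n)) t.

Definition tau_exp (y : R) : Rbar :=
  Lub_Rbar (fun t : R => infinitely_often (fun n =>
     ~ (Z.odd (cf_p y n) = true /\ Z.odd (cf_q y n) = true) /\ cf_approx y t n)).

Definition gamma_exp (y : R) : Rbar :=
  Lub_Rbar (fun g : R => infinitely_often (fun n =>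
     (Z.modulo (cf_q y n) 4 = 0 \/ Z.modulo (cf_q y n) 4 = 1 \/ Z.modulo (cf_q y n) 4 = 3)%Z
     /\ cf_approx y g n)).

From Stdlib Require Import Reals ZArith Znumtheory Lia Lra.
From Coquelicot Require Import Coquelicot.
Open Scope R_scope.

(* Both exponents are at least 2: every convergent satisfies
   |y - p_n/q_n| < 1/q_n^2, and of two consecutive convergents at least one
   passes either parity test, because p_(n+1) q_n - p_n q_(n+1) = +-1 is odd.
   Above 2 one passes between the exponents with Legendre's theorem (a reduced
   p/q with |y - p/q| < 1/(2q^2) is a convergent of y).  If q is not 2 mod 4,
   then 2p/q in lowest terms is a fraction P/Q with P, Q not both odd and
   q/2 <= Q <= q, at distance 2|x - p/q| from 2x; conversely, halving a
   convergent P/Q of 2x with P, Q not both odd gives a reduced p/q with q not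
   2 mod 4 and Q <= q <= 2Q.  Such bounded changes of the error and of the
   denominator cost only an arbitrarily small part of the exponent. *)

Lemma Rpower_pos (x e : R) : 0 < Rpower x e.
Proof. apply exp_pos. Qed.

Lemma Rpower_eventually_ge (eps M : R) : 0 < eps ->
  exists B, 0 < B /\ forall Q, B <= Q -> M <= Rpower Q eps.
Proof.
  intros Heps. exists (Rpower (Rmax M 1) (/ eps)). split; [apply Rpower_pos|].
  intros Q HQ.
  apply Rle_trans with (Rpower (Rpower (Rmax M 1) (/ eps)) eps).
  - rewrite Rpower_mult, Rinv_l, Rpower_1 by (pose proof (Rmax_r M 1); lra).
    apply Rmax_l.
  - apply Rle_Rpower_l; [lra|]. split; [apply Rpower_pos | exact HQ].
Qed.

Lemma Rlt_inv_iff_mult (a b : R) : 0 < b -> a < / b <-> a * b < 1.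
Proof.
  intros Hb. split; intros H.
  - apply (Rmult_lt_compat_r b) in H; [|exact Hb]. rewrite Rinv_l in H; lra.
  - apply (Rmult_lt_reg_r b); [exact Hb|]. rewrite Rinv_l; lra.
Qed.

(* Changing the error by the factor [lam] and the denominator by a factor at
   most 2 costs [lam * 2^t'], which [Q^(t - t')] absorbs. *)
Lemma approx_rescale (lam Q Q' e t t' : R) :
  0 < lam -> 1 <= Q -> 0 < Q' <= 2 * Q -> 0 <= t' -> 0 <= e ->
  lam * Rpower 2 t' <= Rpower Q (t - t') ->
  e < / Rpower Q t -> lam * e < / Rpower Q' t'.
Proof.
  intros Hlam HQ HQ' Ht' He Habsorb Happ.
  apply Rlt_inv_iff_mult in Happ; [|apply Rpower_pos].
  apply Rlt_inv_iff_mult; [apply Rpower_pos|].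
  assert (HQ'2 : Rpower Q' t' <= Rpower 2 t' * Rpower Q t').
  { rewrite Rpower_mult_distr by lra. apply Rle_Rpower_l; lra. }
  assert (HQt : Rpower Q t = Rpower Q (t - t') * Rpower Q t').
  { rewrite <- Rpower_plus. f_equal. ring. }
  pose proof (Rpower_pos Q t'). pose proof (Rpower_pos 2 t').
  apply Rle_lt_trans with (e * Rpower Q t); [|exact Happ].
  apply Rle_trans with (e * (lam * Rpower 2 t' * Rpower Q t')).
  - replace (lam * e * Rpower Q' t') with (e * (lam * Rpower Q' t')) by ring.
    apply Rmult_le_compat_l; [exact He|].
    rewrite Rmult_assoc. apply Rmult_le_compat_l; lra.
  - rewrite HQt. apply Rmult_le_compat_l; [exact He|].
    apply Rmult_le_compat_r; lra.
Qed.

Lemma legendre_bound_of_approx (Q e t : R) :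
  0 < Q -> 2 <= Rpower Q (t - 2) -> e < / Rpower Q t -> e < / (2 * Q ^ 2).
Proof.
  intros HQ H2 He. apply Rlt_le_trans with (/ Rpower Q t); [exact He|].
  apply Rinv_le_contravar; [nra|].
  replace t with ((t - 2) + INR 2) at 1 by (simpl; ring).
  rewrite Rpower_plus, Rpower_pow by exact HQ. nra.
Qed.

Lemma Rabs_le_Rabs_add (a b : R) : 0 <= a * b -> Rabs a <= Rabs (a + b).
Proof.
  intros Hab. destruct (Rle_or_lt 0 a).
  - assert (0 <= b \/ a = 0) as [Hb|Ha] by nra.
    + rewrite !Rabs_right by lra. lra.
    + subst a. rewrite Rabs_R0. apply Rabs_pos.
  - assert (b <= 0) by nra. rewrite !Rabs_left1 by lra. lra.
Qed.

Lemma Lub_Rbar_le_of_below (A B : R -> Prop) :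
  (forall t, A t -> forall t', t' < t -> B t') ->
  Rbar_le (Lub_Rbar A) (Lub_Rbar B).
Proof.
  intros HAB. destruct (Lub_Rbar_correct A) as [_ HAleast].
  destruct (Lub_Rbar_correct B) as [HBub _].
  apply HAleast. intros t At.
  destruct (Lub_Rbar B) as [l| |]; simpl; [| exact I |].
  - apply Rnot_lt_le. intros Hlt.
    assert (Hmid : (l + t) / 2 < t) by lra.
    specialize (HBub _ (HAB t At _ Hmid)). simpl in HBub. lra.
  - assert (Hpred : t - 1 < t) by lra.
    exact (HBub _ (HAB t At _ Hpred)).
Qed.

Lemma irrational_neq_frac (r : R) (p q : Z) :
  irrational r -> q <> 0%Z -> r <> IZR p / IZR q.
Proof.
  intros Hr Hq E. apply Hr. destruct (Z_lt_le_dec 0 q).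
  - exists p, q. split; [lia | exact E].
  - exists (- p)%Z, (- q)%Z. split; [lia|].
    rewrite E, !opp_IZR. field. apply not_0_IZR. exact Hq.
Qed.

Lemma irrational_mult_Z (k : Z) (x : R) :
  irrational x -> k <> 0%Z -> irrational (IZR k * x).
Proof.
  intros Hx Hk [p [q [Hq E]]].
  apply (irrational_neq_frac x p (k * q) Hx); [lia|].
  assert (Hk' : IZR k <> 0) by (apply not_0_IZR; exact Hk).
  replace x with (IZR k * x / IZR k) by (field; exact Hk').
  rewrite E, mult_IZR. field. split; [apply not_0_IZR; lia | exact Hk'].
Qed.

Lemma irrational_inv_sub_Z (r : R) (a : Z) :
  irrational r -> irrational (/ (r - IZR a)).
Proof.
  intros Hr [p [q [Hq E]]].
  assert (Hra : r - IZR a <> 0).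
  { intros H. apply (irrational_neq_frac r a 1 Hr); [lia|]. rewrite Rdiv_1_r. lra. }
  assert (Hp : p <> 0%Z).
  { intros ->. apply (Rinv_neq_0_compat _ Hra). rewrite E. unfold Rdiv. ring. }
  apply (irrational_neq_frac r (a * p + q) p Hr Hp).
  assert (Hq' : IZR q <> 0) by (apply not_0_IZR; lia).
  assert (Hp' : IZR p <> 0) by (apply not_0_IZR; exact Hp).
  assert (r - IZR a = IZR q / IZR p) as Er.
  { rewrite <- (Rinv_inv (r - IZR a)), E. field. split; assumption. }
  replace r with (IZR a + IZR q / IZR p) by lra.
  rewrite plus_IZR, mult_IZR. field. exact Hp'.
Qed.

Definition q_not_2mod4 (q : Z) : Prop :=
  (q mod 4 = 0 \/ q mod 4 = 1 \/ q mod 4 = 3)%Z.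

Definition not_both_odd (p q : Z) : Prop :=
  ~ (Z.odd p = true /\ Z.odd q = true).

Lemma q_not_2mod4_iff (q : Z) : q_not_2mod4 q <-> (q mod 4 <> 2)%Z.
Proof. unfold q_not_2mod4. pose proof (Z.mod_pos_bound q 4). lia. Qed.

Lemma Z_odd_mod4_2 (q : Z) : (q mod 4 = 2)%Z -> Z.odd q = false.
Proof.
  intros Hq. replace q with (2 * (2 * (q / 4) + 1))%Z by (Z.div_mod_to_equations; lia).
  apply Z.odd_even.
Qed.

Lemma Z_Even_of_odd_false (n : Z) : Z.odd n = false -> Z.Even n.
Proof. intros Hn. apply Z.even_spec. rewrite <- Z.negb_odd, Hn. reflexivity. Qed.

Lemma rel_prime_odd_2 (q : Z) : Z.odd q = true -> rel_prime q 2.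
Proof.
  intros Hq. apply Z.odd_spec in Hq. destruct Hq as [k ->].
  apply bezout_rel_prime, (Bezout_intro _ _ _ 1 (- k)). ring.
Qed.

Lemma double_reduced_fraction (p q : Z) :
  rel_prime p q -> (0 < q)%Z -> q_not_2mod4 q ->
  exists P Q, rel_prime P Q /\ (0 < Q)%Z /\ not_both_odd P Q /\
    (Q <= 2 * q)%Z /\ (q <= 2 * Q)%Z /\ (P * q = 2 * (p * Q))%Z.
Proof.
  intros Hpq Hq Hmod. destruct Hmod as [H0 | H13].
  - assert (Hj : q = (4 * (q / 4))%Z) by (Z.div_mod_to_equations; lia).
    set (j := (q / 4)%Z) in Hj. clearbody j. subst q.
    exists p, (2 * j)%Z. split; [|split; [lia|split; [|split; [lia|split; [lia|ring]]]]].
    + apply rel_prime_sym, (rel_prime_div (4 * j)); [apply rel_prime_sym, Hpq|].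
      exists 2%Z. ring.
    + unfold not_both_odd. rewrite Z.odd_even. intros [_ H]. discriminate.
  - assert (Hodd : Z.odd q = true).
    { pose proof (Zmod_odd q) as Hq2. destruct (Z.odd q); [reflexivity|].
      Z.div_mod_to_equations. lia. }
    exists (2 * p)%Z, q. split; [|split; [lia|split; [|split; [lia|split; [lia|ring]]]]].
    + apply rel_prime_sym, rel_prime_mult;
        [apply rel_prime_odd_2, Hodd | apply rel_prime_sym, Hpq].
    + unfold not_both_odd. rewrite Z.odd_even. intros [H _]. discriminate.
Qed.

Lemma halve_reduced_fraction (P Q : Z) :
  rel_prime P Q -> (0 < Q)%Z -> not_both_odd P Q ->
  exists p q, rel_prime p q /\ (0 < q)%Z /\ q_not_2mod4 q /\
    (q <= 2 * Q)%Z /\ (Q <= 2 * q)%Z /\ (2 * (p * Q) = P * q)%Z.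
Proof.
  intros HPQ HQ Hpar. destruct (Z.odd P) eqn:HP.
  - assert (HQeven : Z.odd Q = false).
    { unfold not_both_odd in Hpar. rewrite HP in Hpar.
      destruct (Z.odd Q); [exfalso; apply Hpar; split|]; reflexivity. }
    destruct (Z_Even_of_odd_false Q HQeven) as [k Hk].
    exists P, (2 * Q)%Z. split; [|split; [lia|split; [|split; [lia|split; [lia|ring]]]]].
    + rewrite Z.mul_comm. apply rel_prime_mult; [exact HPQ|].
      apply rel_prime_odd_2, HP.
    + left. subst Q. replace (2 * (2 * k))%Z with (k * 4)%Z by ring. apply Z_mod_mult.
  - destruct (Z_Even_of_odd_false P HP) as [h Hh]. subst P.
    assert (HQodd : Z.odd Q = true).
    { destruct (Z.odd Q) eqn:HQ2; [reflexivity|]. exfalso.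
      destruct (Z_Even_of_odd_false Q HQ2) as [k Hk].
      destruct HPQ as [_ _ Hcommon].
      destruct (Hcommon 2%Z) as [m Hm]; [exists h; ring | exists k; lia | lia]. }
    exists h, Q. split; [|split; [lia|split; [|split; [lia|split; [lia|ring]]]]].
    + apply (rel_prime_div (2 * h)); [exact HPQ|]. exists 2%Z. ring.
    + apply q_not_2mod4_iff. intros H2. rewrite (Z_odd_mod4_2 Q H2) in HQodd. discriminate.
Qed.

Definition cf_p_prev (y : R) (n : nat) : Z := fst (snd (cf_pq y n)).
Definition cf_q_prev (y : R) (n : nat) : Z := snd (snd (cf_pq y n)).

Section ContinuedFraction.

Variable y : R.

Lemma cf_pS n : cf_p y (S n) = (cf_a y (S n) * cf_p y n + cf_p_prev y n)%Z.
Proof. unfold cf_p, cf_p_prev; simpl. destruct (cf_pq y n) as [[p q] [p' q']]. reflexivity. Qed.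

Lemma cf_qS n : cf_q y (S n) = (cf_a y (S n) * cf_q y n + cf_q_prev y n)%Z.
Proof. unfold cf_q, cf_q_prev; simpl. destruct (cf_pq y n) as [[p q] [p' q']]. reflexivity. Qed.

Lemma cf_p_prevS n : cf_p_prev y (S n) = cf_p y n.
Proof. unfold cf_p, cf_p_prev; simpl. destruct (cf_pq y n) as [[p q] [p' q']]. reflexivity. Qed.

Lemma cf_q_prevS n : cf_q_prev y (S n) = cf_q y n.
Proof. unfold cf_q, cf_q_prev; simpl. destruct (cf_pq y n) as [[p q] [p' q']]. reflexivity. Qed.

Definition cf_det (n : nat) : Z :=
  (cf_p y n * cf_q_prev y n - cf_p_prev y n * cf_q y n)%Z.

Lemma cf_det_unit n : cf_det n = 1%Z \/ cf_det n = (-1)%Z.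
Proof.
  induction n as [|n IH].
  - right. unfold cf_det, cf_p, cf_q, cf_p_prev, cf_q_prev. simpl. ring.
  - assert (cf_det (S n) = (- cf_det n)%Z) as ->; [|lia].
    unfold cf_det. rewrite cf_pS, cf_qS, cf_p_prevS, cf_q_prevS. ring.
Qed.

Lemma cf_det_consecutive n :
  (cf_p y (S n) * cf_q y n - cf_p y n * cf_q y (S n) = 1)%Z \/
  (cf_p y (S n) * cf_q y n - cf_p y n * cf_q y (S n) = -1)%Z.
Proof.
  pose proof (cf_det_unit (S n)) as H. unfold cf_det in H.
  rewrite cf_p_prevS, cf_q_prevS in H. exact H.
Qed.

Lemma cf_rel_prime n : rel_prime (cf_p y n) (cf_q y n).
Proof.
  apply bezout_rel_prime.
  apply (Bezout_intro _ _ _ (cf_det n * cf_q_prev y n) (- cf_det n * cf_p_prev y n)).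
  transitivity (cf_det n * cf_det n)%Z; [unfold cf_det; ring|].
  destruct (cf_det_unit n) as [-> | ->]; reflexivity.
Qed.

Lemma cf_det_consecutive_odd n :
  Z.odd (cf_p y (S n) * cf_q y n - cf_p y n * cf_q y (S n)) = true.
Proof. destruct (cf_det_consecutive n) as [-> | ->]; reflexivity. Qed.

Lemma cf_q_not_2mod4_or_next n :
  q_not_2mod4 (cf_q y n) \/ q_not_2mod4 (cf_q y (S n)).
Proof.
  rewrite !q_not_2mod4_iff.
  destruct (Z.eq_dec (cf_q y n mod 4) 2) as [H0|H0]; [right|left; exact H0].
  intros H1. pose proof (cf_det_consecutive_odd n) as Hodd.
  rewrite Z.odd_sub, !Z.odd_mul, (Z_odd_mod4_2 _ H0), (Z_odd_mod4_2 _ H1) in Hodd.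
  rewrite !Bool.andb_false_r in Hodd. discriminate.
Qed.

Lemma cf_not_both_odd_or_next n :
  not_both_odd (cf_p y n) (cf_q y n) \/ not_both_odd (cf_p y (S n)) (cf_q y (S n)).
Proof.
  unfold not_both_odd.
  destruct (Z.odd (cf_p y n)) eqn:Hp0, (Z.odd (cf_q y n)) eqn:Hq0;
    try (left; intros [H1 H2]; discriminate).
  right. intros [Hp1 Hq1]. pose proof (cf_det_consecutive_odd n) as Hodd.
  rewrite Z.odd_sub, !Z.odd_mul, Hp0, Hq0, Hp1, Hq1 in Hodd. discriminate.
Qed.

Lemma cf_coords_consecutive n (p q : Z) :
  exists u v, p = (u * cf_p y n + v * cf_p y (S n))%Z /\
              q = (u * cf_q y n + v * cf_q y (S n))%Z.
Proof.
  set (d := (cf_p y (S n) * cf_q y n - cf_p y n * cf_q y (S n))%Z).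
  assert (Hd : (d * d = 1)%Z)
    by (destruct (cf_det_consecutive n) as [E|E]; unfold d; rewrite E; reflexivity).
  exists (d * (cf_p y (S n) * q - p * cf_q y (S n)))%Z, (d * (p * cf_q y n - cf_p y n * q))%Z.
  split.
  - transitivity (p * (d * d))%Z; [rewrite Hd; ring | unfold d; ring].
  - transitivity (q * (d * d))%Z; [rewrite Hd; ring | unfold d; ring].
Qed.

Lemma cf_rem_decomp n : cf_rem y n = IZR (cf_a y n) + / cf_rem y (S n).
Proof.
  change (cf_rem y (S n)) with (/ (cf_rem y n - IZR (cf_a y n))).
  rewrite Rinv_inv. ring.
Qed.

Hypothesis y_irr : irrational y.

Lemma cf_rem_irrational n : irrational (cf_rem y n).
Proof. induction n as [|n IH]; [exact y_irr | apply irrational_inv_sub_Z, IH]. Qed.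

Lemma cf_frac_bounds n : 0 < cf_rem y n - IZR (cf_a y n) < 1.
Proof.
  unfold cf_a. destruct (base_Int_part (cf_rem y n)) as [[Hlt | Heq] Hgt]; [lra|].
  exfalso. apply (irrational_neq_frac _ (Int_part (cf_rem y n)) 1 (cf_rem_irrational n)); [lia|].
  rewrite Rdiv_1_r. symmetry. exact Heq.
Qed.

Lemma cf_rem_gt_1 n : 1 < cf_rem y (S n).
Proof.
  pose proof (cf_frac_bounds n).
  change (cf_rem y (S n)) with (/ (cf_rem y n - IZR (cf_a y n))).
  rewrite <- Rinv_1. apply Rinv_lt_contravar; lra.
Qed.

Lemma cf_a_ge_1 n : (1 <= cf_a y (S n))%Z.
Proof.
  pose proof (cf_rem_gt_1 n). unfold cf_a.
  destruct (base_Int_part (cf_rem y (S n))) as [_ Hgt].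
  assert (Hpos : 0 < IZR (Int_part (cf_rem y (S n)))) by lra.
  apply lt_IZR in Hpos. lia.
Qed.

Lemma cf_q_bounds n : (1 <= cf_q y n)%Z /\ (0 <= cf_q_prev y n <= cf_q y n)%Z.
Proof.
  induction n as [|n IH]; [unfold cf_q, cf_q_prev; simpl; lia|].
  rewrite cf_qS, cf_q_prevS. pose proof (cf_a_ge_1 n). nia.
Qed.

Lemma cf_q_mono n m : (n <= m)%nat -> (cf_q y n <= cf_q y m)%Z.
Proof.
  induction 1 as [|m _ IH]; [lia|].
  rewrite cf_qS. pose proof (cf_q_bounds m). pose proof (cf_a_ge_1 m). nia.
Qed.

Lemma cf_q_ge_index n : (Z.of_nat n <= cf_q y n)%Z.
Proof.
  induction n as [|n IH]; [pose proof (cf_q_bounds 0); lia|].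
  rewrite cf_qS. pose proof (cf_a_ge_1 n). pose proof (cf_q_bounds n).
  destruct n as [|m]; [simpl; nia|].
  rewrite cf_q_prevS. pose proof (cf_q_bounds m). nia.
Qed.

Lemma cf_rem_identity n :
  y * (IZR (cf_q y n) * cf_rem y (S n) + IZR (cf_q_prev y n)) =
  IZR (cf_p y n) * cf_rem y (S n) + IZR (cf_p_prev y n).
Proof.
  induction n as [|n IH].
  - change (cf_q y 0) with 1%Z; change (cf_q_prev y 0) with 0%Z.
    change (cf_p y 0) with (cf_a y 0); change (cf_p_prev y 0) with 1%Z.
    pose proof (cf_rem_decomp 0) as E. change (cf_rem y 0) with y in E.
    pose proof (cf_rem_gt_1 0).
    apply Rminus_diag_uniq.
    transitivity (cf_rem y 1 * (y - (IZR (cf_a y 0) + / cf_rem y 1))); [field; lra|].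
    rewrite <- E. ring.
  - rewrite cf_qS, cf_q_prevS, cf_pS, cf_p_prevS, !plus_IZR, !mult_IZR.
    rewrite (cf_rem_decomp (S n)) in IH. pose proof (cf_rem_gt_1 (S n)).
    set (s := cf_rem y (S (S n))) in *.
    apply Rminus_diag_uniq.
    transitivity (s * (y * (IZR (cf_q y n) * (IZR (cf_a y (S n)) + / s) + IZR (cf_q_prev y n))
      - (IZR (cf_p y n) * (IZR (cf_a y (S n)) + / s) + IZR (cf_p_prev y n)))); [field; lra|].
    rewrite IH. ring.
Qed.

Definition cf_err (n : nat) : R := y * IZR (cf_q y n) - IZR (cf_p y n).

Definition cf_den (n : nat) : R := IZR (cf_q y n) * cf_rem y (S n) + IZR (cf_q_prev y n).

Lemma cf_err_mul_den n : cf_err n * cf_den n = - IZR (cf_det n).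
Proof.
  unfold cf_err, cf_den, cf_det. rewrite minus_IZR, !mult_IZR.
  transitivity (IZR (cf_q y n) * (y * (IZR (cf_q y n) * cf_rem y (S n) + IZR (cf_q_prev y n)))
    - IZR (cf_p y n) * (IZR (cf_q y n) * cf_rem y (S n) + IZR (cf_q_prev y n))); [ring|].
  rewrite cf_rem_identity. ring.
Qed.

Lemma cf_q_lt_den n : IZR (cf_q y n) < cf_den n.
Proof.
  pose proof (cf_q_bounds n) as [Hq [Hq' _]]. pose proof (cf_rem_gt_1 n).
  apply IZR_le in Hq. apply IZR_le in Hq'. unfold cf_den. nra.
Qed.

Lemma Rabs_cf_err_mul_den n : Rabs (cf_err n) * cf_den n = 1.
Proof.
  pose proof (cf_q_lt_den n). pose proof (cf_q_bounds n) as [Hq _]. apply IZR_le in Hq.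
  rewrite <- (Rabs_right (cf_den n)) by lra.
  rewrite <- Rabs_mult, cf_err_mul_den, Rabs_Ropp, <- abs_IZR.
  destruct (cf_det_unit n) as [-> | ->]; reflexivity.
Qed.

Lemma cf_err_mul_q_lt_1 n : Rabs (cf_err n) * IZR (cf_q y n) < 1.
Proof.
  pose proof (Rabs_cf_err_mul_den n) as E. pose proof (cf_q_lt_den n).
  pose proof (Rabs_pos (cf_err n)).
  assert (Rabs (cf_err n) <> 0) by (intros E0; rewrite E0 in E; lra). nra.
Qed.

Lemma cf_err_alternate n : cf_err n * cf_err (S n) < 0.
Proof.
  assert (E : (cf_err n * cf_err (S n)) * (cf_den n * cf_den (S n)) = -1).
  { transitivity ((cf_err n * cf_den n) * (cf_err (S n) * cf_den (S n))); [ring|].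
    rewrite !cf_err_mul_den.
    assert (cf_det (S n) = (- cf_det n)%Z) as ->
      by (unfold cf_det; rewrite cf_pS, cf_qS, cf_p_prevS, cf_q_prevS; ring).
    rewrite opp_IZR. destruct (cf_det_unit n) as [-> | ->]; simpl; lra. }
  pose proof (cf_q_lt_den n). pose proof (cf_q_lt_den (S n)).
  pose proof (cf_q_bounds n) as [Hq0 _]. pose proof (cf_q_bounds (S n)) as [Hq1 _].
  apply IZR_le in Hq0. apply IZR_le in Hq1.
  assert (0 < cf_den n * cf_den (S n)) by nra. nra.
Qed.

Lemma cf_convergent_error n :
  Rabs (y - IZR (cf_p y n) / IZR (cf_q y n)) * IZR (cf_q y n) ^ 2 < 1.
Proof.
  pose proof (cf_err_mul_q_lt_1 n). pose proof (cf_q_bounds n) as [Hq _]. apply IZR_le in Hq.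
  replace (y - IZR (cf_p y n) / IZR (cf_q y n)) with (cf_err n / IZR (cf_q y n))
    by (unfold cf_err; field; lra).
  unfold Rdiv. rewrite Rabs_mult, Rabs_inv, (Rabs_right (IZR (cf_q y n))) by lra.
  replace (Rabs (cf_err n) * / IZR (cf_q y n) * IZR (cf_q y n) ^ 2)
    with (Rabs (cf_err n) * IZR (cf_q y n)) by (field; lra).
  assumption.
Qed.

Lemma cf_approx_le_2 n t : t <= 2 -> cf_approx y t n.
Proof.
  intros Ht. unfold cf_approx. pose proof (cf_convergent_error n).
  pose proof (cf_q_bounds n) as [Hq _]. apply IZR_le in Hq.
  apply Rlt_inv_iff_mult; [apply Rpower_pos|].
  assert (Rpower (IZR (cf_q y n)) t <= IZR (cf_q y n) ^ 2).
  { rewrite <- Rpower_pow by lra. apply Rle_Rpower; [lra | simpl; lra]. }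
  pose proof (Rabs_pos (y - IZR (cf_p y n) / IZR (cf_q y n))). nra.
Qed.

Lemma infinitely_often_approx_le_2 (C : nat -> Prop) t :
  (forall n, C n \/ C (S n)) -> t <= 2 ->
  infinitely_often (fun n => C n /\ cf_approx y t n).
Proof.
  intros HC Ht N.
  destruct (HC N); [exists N | exists (S N)];
    (split; [lia | split; [assumption | apply cf_approx_le_2, Ht]]).
Qed.

(* Writing (p, q) in the basis of two consecutive convergents, the two
   components of the error [y q - p] have the same sign. *)
Lemma cf_best_approx n (p q : Z) :
  (0 < q)%Z -> (q < cf_q y (S n))%Z ->
  Rabs (cf_err n) <= Rabs (y * IZR q - IZR p).
Proof.
  intros Hq Hqn.
  destruct (cf_coords_consecutive n p q) as [u [v [Hp Hq']]].
  pose proof (cf_q_bounds n) as [Hq0 _]. pose proof (cf_q_mono n (S n) (le_S _ _ (le_n n))).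
  assert (Hu : (1 <= Z.abs u)%Z).
  { assert (u <> 0%Z) by (intros ->; destruct (Z_lt_le_dec 0 v); nia). lia. }
  assert (Huv : (u * v <= 0)%Z).
  { destruct (Z_lt_le_dec 0 u), (Z_lt_le_dec 0 v); nia. }
  assert (Eerr : y * IZR q - IZR p = IZR u * cf_err n + IZR v * cf_err (S n)).
  { rewrite Hp, Hq'. unfold cf_err. rewrite !plus_IZR, !mult_IZR. ring. }
  rewrite Eerr.
  apply Rle_trans with (Rabs (IZR u * cf_err n)).
  - rewrite Rabs_mult, <- abs_IZR. apply IZR_le in Hu.
    pose proof (Rabs_pos (cf_err n)). nra.
  - apply Rabs_le_Rabs_add. apply IZR_le in Huv. rewrite mult_IZR in Huv.
    pose proof (cf_err_alternate n).
    replace (IZR u * cf_err n * (IZR v * cf_err (S n)))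
      with ((IZR u * IZR v) * (cf_err n * cf_err (S n))) by ring. nra.
Qed.

Lemma cf_q_bracket (q : Z) : (1 <= q)%Z ->
  exists n, (cf_q y n <= q < cf_q y (S n))%Z.
Proof.
  intros Hq.
  assert (Hbelow : forall N, (q < cf_q y N)%Z -> exists n, (cf_q y n <= q < cf_q y (S n))%Z).
  { induction N as [|N IH]; intros HN.
    - change (cf_q y 0) with 1%Z in HN. lia.
    - destruct (Z_lt_le_dec q (cf_q y N)); [apply IH; assumption | exists N; lia]. }
  apply (Hbelow (S (Z.to_nat q))). pose proof (cf_q_ge_index (S (Z.to_nat q))). lia.
Qed.

(* [p q_n - p_n q = q e_n - q_n (y q - p)] is an integer of absolute value at
   most [2 q |y q - p| < 1], by the best approximation property. *)
Lemma cf_cross_eq_of_close n (p q : Z) :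
  (cf_q y n <= q < cf_q y (S n))%Z -> Rabs (y * IZR q - IZR p) * (2 * IZR q) < 1 ->
  (p * cf_q y n = cf_p y n * q)%Z.
Proof.
  intros [Hqn HqSn] HE.
  pose proof (cf_q_bounds n) as [Hqn1 _].
  pose proof (cf_best_approx n p q ltac:(lia) HqSn) as Hbest.
  set (E := y * IZR q - IZR p) in *.
  destruct (Z.eq_dec (p * cf_q y n) (cf_p y n * q)) as [Heq | Hneq]; [exact Heq|].
  exfalso.
  assert (H1 : 1 <= Rabs (IZR (p * cf_q y n - cf_p y n * q))).
  { rewrite <- abs_IZR. apply IZR_le. lia. }
  replace (IZR (p * cf_q y n - cf_p y n * q))
    with (IZR q * cf_err n + - (IZR (cf_q y n) * E)) in H1
    by (unfold cf_err, E; rewrite minus_IZR, !mult_IZR; ring).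
  pose proof (Rabs_triang (IZR q * cf_err n) (- (IZR (cf_q y n) * E))) as Htri.
  apply IZR_le in Hqn1. apply IZR_le in Hqn.
  rewrite Rabs_Ropp, !Rabs_mult, (Rabs_right (IZR q)), (Rabs_right (IZR (cf_q y n))) in Htri
    by lra.
  pose proof (Rabs_pos E).
  assert (IZR q * Rabs (cf_err n) <= IZR q * Rabs E) by (apply Rmult_le_compat_l; lra).
  assert (IZR (cf_q y n) * Rabs E <= IZR q * Rabs E) by (apply Rmult_le_compat_r; lra).
  lra.
Qed.

Lemma legendre (p q : Z) : rel_prime p q -> (0 < q)%Z ->
  Rabs (y - IZR p / IZR q) < / (2 * IZR q ^ 2) ->
  exists n, cf_p y n = p /\ cf_q y n = q.
Proof.
  intros Hpq Hq Happ.
  destruct (cf_q_bracket q ltac:(lia)) as [n Hbracket].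
  assert (HqR : 0 < IZR q) by (apply IZR_lt; exact Hq).
  assert (HE : Rabs (y * IZR q - IZR p) * (2 * IZR q) < 1).
  { apply Rlt_inv_iff_mult in Happ; [|nra].
    replace (y * IZR q - IZR p) with ((y - IZR p / IZR q) * IZR q) by (field; lra).
    rewrite Rabs_mult, (Rabs_right (IZR q)) by lra. nra. }
  pose proof (cf_cross_eq_of_close n p q Hbracket HE) as Hcross.
  destruct (rel_prime_cross_prod p q (cf_p y n) (cf_q y n) Hpq (cf_rel_prime n))
    as [Hp Hq']; [lia | pose proof (cf_q_bounds n); lia | rewrite Hcross; ring |].
  exists n. split; symmetry; assumption.
Qed.

Lemma infinitely_often_large_q (A : nat -> Prop) (M : R) :
  infinitely_often A -> exists n, A n /\ M <= IZR (cf_q y n).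
Proof.
  intros HA. destruct (HA (Z.to_nat (up M))) as [n [Hn An]].
  exists n. split; [exact An|].
  pose proof (cf_q_ge_index n). destruct (archimed M) as [HM _].
  assert (Hup : (up M <= cf_q y n)%Z) by lia. apply IZR_le in Hup. lra.
Qed.

End ContinuedFraction.

Lemma exponent_transfer (y y' lam t t' : R) (S R : Z -> Z -> Prop) :
  irrational y -> irrational y' -> y' = lam * y -> 0 < lam -> 2 < t' < t ->
  (forall p q, rel_prime p q -> (0 < q)%Z -> S p q ->
     exists P Q, rel_prime P Q /\ (0 < Q)%Z /\ R P Q /\
       (Q <= 2 * q)%Z /\ (q <= 2 * Q)%Z /\ IZR P * IZR q = lam * (IZR p * IZR Q)) ->
  infinitely_often (fun n => S (cf_p y n) (cf_q y n) /\ cf_approx y t n) ->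
  infinitely_often (fun m => R (cf_p y' m) (cf_q y' m) /\ cf_approx y' t' m).
Proof.
  intros Hy Hy' Ey' Hlam Ht Hreduce HS N.
  destruct (Rpower_eventually_ge (t - t') (lam * Rpower 2 t')) as [B1 [HB1pos HB1]]; [lra|].
  destruct (Rpower_eventually_ge (t' - 2) 2) as [B2 [HB2pos HB2]]; [lra|].
  pose proof (cf_q_bounds y' Hy' N) as [HqN _]. apply IZR_le in HqN.
  (* Since Q >= q/2, a large q makes Q exceed B2 and q_N(y'), which forces the
     convergent of y' found below to have index at least N. *)
  destruct (infinitely_often_large_q y Hy _ (1 + B1 + 2 * B2 + 2 * IZR (cf_q y' N)) HS)
    as [n [[Sn Happ] Hlarge]].
  pose proof (cf_q_bounds y Hy n) as [Hqn _].
  destruct (Hreduce _ _ (cf_rel_prime y n) ltac:(lia) Sn)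
    as [P [Q [HPQ [HQ [RPQ [HQq [HqQ Hfrac]]]]]]].
  set (p := cf_p y n) in *. set (q := cf_q y n) in *.
  apply IZR_le in HQq. apply IZR_le in HqQ. rewrite mult_IZR in HQq, HqQ.
  assert (HQR : 0 < IZR Q) by (apply IZR_lt; exact HQ).
  assert (HqR : 1 <= IZR q) by (apply IZR_le; exact Hqn).
  assert (Hratio : IZR P / IZR Q = lam * (IZR p / IZR q)).
  { apply (Rmult_eq_reg_r (IZR Q * IZR q)); [|nra].
    transitivity (IZR P * IZR q); [field; lra|]. rewrite Hfrac. field. lra. }
  assert (Herr : Rabs (y' - IZR P / IZR Q) = lam * Rabs (y - IZR p / IZR q)).
  { rewrite Hratio, Ey'.
    replace (lam * y - lam * (IZR p / IZR q)) with (lam * (y - IZR p / IZR q)) by ring.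
    rewrite Rabs_mult, (Rabs_right lam) by lra. reflexivity. }
  assert (Happ' : Rabs (y' - IZR P / IZR Q) < / Rpower (IZR Q) t').
  { rewrite Herr. apply (approx_rescale lam (IZR q) (IZR Q) _ t t'); try lra.
    - apply Rabs_pos.
    - apply HB1. lra.
    - exact Happ. }
  assert (Hleg : Rabs (y' - IZR P / IZR Q) < / (2 * IZR Q ^ 2)).
  { apply (legendre_bound_of_approx _ _ t'); [lra | apply HB2; lra | exact Happ']. }
  destruct (legendre y' Hy' P Q HPQ HQ Hleg) as [m [Pm Qm]].
  exists m. split.
  - destruct (le_lt_dec N m) as [Hm | Hm]; [exact Hm|]. exfalso.
    pose proof (cf_q_mono y' Hy' m N (Nat.lt_le_incl _ _ Hm)) as Hmono.
    rewrite Qm in Hmono. apply IZR_le in Hmono. lra.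
  - unfold cf_approx. rewrite Pm, Qm. split; assumption.
Qed.

Lemma gamma_approx_to_tau_approx (x t t' : R) : irrational x -> 2 < t' < t ->
  infinitely_often (fun n => q_not_2mod4 (cf_q x n) /\ cf_approx x t n) ->
  infinitely_often (fun n =>
    not_both_odd (cf_p (2 * x) n) (cf_q (2 * x) n) /\ cf_approx (2 * x) t' n).
Proof.
  intros Hx Ht.
  apply (exponent_transfer x (2 * x) 2 t t' (fun _ q => q_not_2mod4 q) not_both_odd);
    [exact Hx | apply irrational_mult_Z; [exact Hx | lia] | reflexivity | lra | exact Ht |].
  intros p q Hpq Hq Hmod.
  destruct (double_reduced_fraction p q Hpq Hq Hmod) as [P [Q [HPQ [HQ [Hpar [H1 [H2 E]]]]]]].
  exists P, Q. do 5 (split; [assumption|]).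
  rewrite <- !mult_IZR, E. reflexivity.
Qed.

Lemma tau_approx_to_gamma_approx (x t t' : R) : irrational x -> 2 < t' < t ->
  infinitely_often (fun n =>
    not_both_odd (cf_p (2 * x) n) (cf_q (2 * x) n) /\ cf_approx (2 * x) t n) ->
  infinitely_often (fun n => q_not_2mod4 (cf_q x n) /\ cf_approx x t' n).
Proof.
  intros Hx Ht.
  apply (exponent_transfer (2 * x) x (/ 2) t t' not_both_odd (fun _ q => q_not_2mod4 q));
    [apply irrational_mult_Z; [exact Hx | lia] | exact Hx | field | lra | exact Ht |].
  intros P Q HPQ HQ Hpar.
  destruct (halve_reduced_fraction P Q HPQ HQ Hpar) as [p [q [Hpq [Hq [Hmod [H1 [H2 E]]]]]]].
  exists p, q. do 5 (split; [assumption|]).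
  assert (ER : 2 * (IZR p * IZR Q) = IZR P * IZR q)
    by (rewrite <- !mult_IZR, <- E, mult_IZR; reflexivity).
  lra.
Qed.

Theorem lemma3p1 (x : R) (hx : irrational x) :
  gamma_exp x = tau_exp (2 * x).
Proof.
  assert (hx2 : irrational (2 * x)) by (apply irrational_mult_Z; [exact hx | lia]).
  unfold gamma_exp, tau_exp.
  apply Rbar_le_antisym; apply Lub_Rbar_le_of_below;
    intros t Ht t' Ht'; destruct (Rle_or_lt t' 2) as [Hle | Hgt].
  - apply (infinitely_often_approx_le_2 _ hx2); [apply cf_not_both_odd_or_next | exact Hle].
  - exact (gamma_approx_to_tau_approx x t t' hx (conj Hgt Ht') Ht).
  - apply (infinitely_often_approx_le_2 _ hx); [apply cf_q_not_2mod4_or_next | exact Hle].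
  - exact (tau_approx_to_gamma_approx x t t' hx (conj Hgt Ht') Ht).
Qed.
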